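(* For every $n\in\mathbb N$, in the field $\mathbb Q(x)$ we have $$\frac{U_n}{U_{n+1}}=\left[0;2x-1,1,\underbrace{2(x-1),1,2(x-1),1,\dots,2(x-1),1}_{n\text{ copies of the pair }2(x-1),1}\right].$$
   Context: $U_n=U_n(x)$ denotes the Chebyshev polynomial of the second kind: $U_0=1$, $U_1=2x$, $U_{n+1}=2xU_n-U_{n-1}$ for $n\ge1$. For elements $a_0,a_1,\dots,a_m$ the finite continued fraction is $[a_0;a_1,\dots,a_m]=a_0+\cfrac{1}{a_1+\cfrac{1}{\ddots+\cfrac{1}{a_m}}}$. *)

From HB Require Import structures.
From mathcomp Require Import all_boot all_order all_algebra.
Set Implicit Arguments. Unset Strict Implicit. Unset Printing Implicit Defensive.
Import Order.TTheory GRing.Theory Num.Theory.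
Local Open Scope ring_scope.

(* Chebyshev polynomials of the second kind over a ring R:
   chebU_pair n = (U_n, U_{n+1}), with U_0 = 1, U_1 = 2x, U_{n+1} = 2x U_n - U_{n-1}. *)
Fixpoint chebU_pair (R : nzRingType) (n : nat) : {poly R} * {poly R} :=
  match n with
  | 0%N => (1, 2%:R *: 'X)
  | m.+1 => let: (a, b) := chebU_pair R m in (b, 2%:R *: 'X * b - a)
  end.

Definition chebU (R : nzRingType) (n : nat) : {poly R} := (chebU_pair R n).1.

Definition Qx : fieldType := {fraction {poly rat}}.
Definition toQx (p : {poly rat}) : Qx := FracField.tofrac p.
Definition xQ : Qx := toQx 'X.

(* Finite continued fraction [a_0; a_1, ..., a_m] = a_0 + 1/(a_1 + 1/(... + 1/a_m)),
   for a nonempty list [:: a_0; ...; a_m] (the empty list is given value 0). *)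
Fixpoint contfrac (F : fieldType) (s : seq F) : F :=
  match s with
  | [::] => 0
  | [:: a] => a
  | a :: s' => a + (contfrac s')^-1
  end.

(* Peeling off the prefix [0; 2x-1, ...] shows it
   suffices that the tail c_n = [1; 2(x-1), 1, ..., 2(x-1), 1] equals
   u_n / (u_{n+1} - (2x-1) u_n).  This is an induction on n: one more period
   turns c_n into v / (v - u) with u = u_n, v = u_{n+1}, and by the three-term
   recurrence u_{n+2} - (2x-1) u_{n+1} = u_{n+1} - u_n.  The denominators never
   vanish because U_n(1) = n + 1, hence also U_{n+1}(1) - U_n(1) = 1. *)
From HB Require Import structures.
From mathcomp Require Import all_boot all_order all_algebra.
From mathcomp Require Import ring.
Import GRing.Theory Num.Theory.
Local Open Scope ring_scope.

Section ChebyshevU.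

Variable R : nzRingType.

Lemma chebU0 : chebU R 0 = 1.
Proof. by []. Qed.

Lemma chebU1 : chebU R 1 = 2%:R *: 'X.
Proof. by []. Qed.

Lemma chebUSS n : chebU R n.+2 = 2%:R *: 'X * chebU R n.+1 - chebU R n.
Proof. by rewrite /chebU /=; case: (chebU_pair R n). Qed.

End ChebyshevU.

Lemma chebU_horner1 (R : comNzRingType) n : (chebU R n).[1] = n.+1%:R.
Proof.
suff: (chebU R n).[1] = n.+1%:R /\ (chebU R n.+1).[1] = n.+2%:R by case.
elim: n => [|n [IHn IHn1]]; first by rewrite chebU0 chebU1 !hornerE.
by split=> //; rewrite chebUSS !hornerE IHn IHn1 -!natr1; ring.
Qed.

Lemma chebU_neq0 (R : numDomainType) n : chebU R n != 0.
Proof.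
apply/eqP => Un0; have /eqP := chebU_horner1 R n.
by rewrite Un0 horner0 eq_sym pnatr_eq0.
Qed.

Lemma chebU_succ_neq (R : comNzRingType) n : chebU R n.+1 != chebU R n.
Proof.
rewrite -subr_eq0; apply/eqP => D0.
have /eqP : (chebU R n.+1 - chebU R n).[1] = 1.
  by rewrite hornerD hornerN !chebU_horner1 -!natr1; ring.
by rewrite D0 horner0 eq_sym oner_eq0.
Qed.

Lemma contfrac_cons2 (F : fieldType) (a b : F) s :
  contfrac (a :: b :: s) = a + (contfrac (b :: s))^-1.
Proof. by []. Qed.

Section PeriodStep.

Variables (F : fieldType) (x u v : F).
Hypothesis u_neq0 : u != 0.

Lemma contfrac_head_step :
  (2%:R * x - 1 + (u / (v - (2%:R * x - 1) * u))^-1)^-1 = u / v.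
Proof.
rewrite invf_div.
have -> : 2%:R * x - 1 + (v - (2%:R * x - 1) * u) / u = v / u by field.
by rewrite invf_div.
Qed.

Lemma contfrac_period_step : v != u ->
  1 + (2%:R * (x - 1) + (u / (v - (2%:R * x - 1) * u))^-1)^-1 = v / (v - u).
Proof.
rewrite -subr_eq0 => vu_neq0; rewrite invf_div.
have -> : 2%:R * (x - 1) + (v - (2%:R * x - 1) * u) / u = (v - u) / u by field.
by rewrite invf_div; field.
Qed.

End PeriodStep.

Lemma toQx_chebU_neq0 n : toQx (chebU rat n) != 0.
Proof. by rewrite /toQx tofrac_eq0 chebU_neq0. Qed.

Lemma toQx_chebU_succ_neq n : toQx (chebU rat n.+1) != toQx (chebU rat n).
Proof. by rewrite /toQx tofrac_eq chebU_succ_neq. Qed.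

Lemma toQx_chebUSS n :
  toQx (chebU rat n.+2) = 2%:R * xQ * toQx (chebU rat n.+1) - toQx (chebU rat n).
Proof.
by rewrite /xQ /toQx chebUSS rmorphB rmorphM scaler_nat rmorphMn mulr_natl.
Qed.

Lemma contfrac_chebU_tail n :
  contfrac (1 :: flatten (nseq n [:: 2%:R * (xQ - 1); 1])) =
  toQx (chebU rat n) / (toQx (chebU rat n.+1) - (2%:R * xQ - 1) * toQx (chebU rat n)).
Proof.
elim: n => [|n IHn].
  rewrite /= /toQx chebU0 chebU1 rmorph1 scaler_nat rmorphMn -mulr_natl -/xQ.
  by rewrite mulr1 opprB addrC subrK divr1.
rewrite [flatten _]/= !contfrac_cons2 IHn.
rewrite contfrac_period_step ?toQx_chebU_neq0 ?toQx_chebU_succ_neq //.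
by rewrite toQx_chebUSS; congr (_ / _); ring.
Qed.

Theorem theorem1p4 (n : nat) :
  toQx (chebU rat n) / toQx (chebU rat n.+1) =
  contfrac ([:: 0; 2%:R * xQ - 1; 1]
            ++ flatten (nseq n [:: 2%:R * (xQ - 1); 1])).
Proof.
rewrite cat_cons !contfrac_cons2 contfrac_chebU_tail add0r.
by rewrite contfrac_head_step ?toQx_chebU_neq0.
Qed.
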